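(* Let $\mathcal A$ be the attraction basin of $x_0$ for the auxiliary flow $\Phi$. Then $\mathcal A$ is open, and: (i) the restriction $f|_{\mathcal A}$ is injective; (ii) $f(\mathcal A)$ is star-shaped with respect to $y_0=f(x_0)$; (iii) $\mathcal A$ is maximal with these properties: every open connected set $C\subseteq D$ containing $x_0$ such that $f|_C$ is injective and $f(C)$ is star-shaped with respect to $y_0$ satisfies $C\subseteq\mathcal A$.
   Context: Standing setting: $X,Y$ are real Banach spaces, $D\subseteq X$ is a nonempty open connected set, $f:D\to Y$ is a local homeomorphism (every point has an open neighbourhood mapped homeomorphically onto an open set), $x_0\in D$, $y_0=f(x_0)$. A flow in $D$ is a map $\Phi:D_\Phi\to D$ such that: (i) $D_\Phi$ is an open subset of $D\times\mathbb R$ and $\Phi$ is continuous; (ii) for each $x\in D$, $\{t:(x,t)\in D_\Phi\}$ is an interval containing $0$; (iii) $\Phi(x,0)=x$; (iv) if $(x,t_1),(x,t_1+t_2)\in D_\Phi$ then $(\Phi(x,t_1),t_2)\in D_\Phi$ and $\Phi(\Phi(x,t_1),t_2)=\Phi(x,t_1+t_2)$. The trajectory through $x$ is global in the future if $\{x\}\times[0,+\infty)\subseteq D_\Phi$. Let $\Psi(y,t)=y_0+e^{-t}(y-y_0)$ for $y\in Y,t\in\mathbb R$. The auxiliary flow $\Phi$ is the unique flow in $D$ of maximal domain with $f(\Phi(x,t))=\Psi(f(x),t)$ for all $(x,t)\in D_\Phi$; for each $x$, $t\mapsto\Phi(x,t)$ is the maximal continuous lifting by $f$ of $t\mapsto\Psi(f(x),t)$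 through $x$ at $t=0$. The attraction basin $\mathcal A$ of $x_0$ is the set of $x\in D$ whose trajectory is global in the future and satisfies $\Phi(x,t)\to x_0$ as $t\to+\infty$. *)

From Stdlib Require Import Reals Lra.
Open Scope R_scope.

Record Banach : Type := {
  car :> Type;
  vzero : car;
  vadd : car -> car -> car;
  vopp : car -> car;
  vscal : R -> car -> car;
  vnorm : car -> R;
  vadd_assoc : forall x y z, vadd x (vadd y z) = vadd (vadd x y) z;
  vadd_comm : forall x y, vadd x y = vadd y x;
  vadd_0 : forall x, vadd x vzero = x;
  vadd_opp : forall x, vadd x (vopp x) = vzero;
  vscal_1 : forall x, vscal 1 x = x;
  vscal_assoc : forall a b x, vscal a (vscal b x) = vscal (a * b) x;
  vscal_distr_v : forall a x y, vscal a (vadd x y) = vadd (vscal a x) (vscal a y);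
  vscal_distr_s : forall a b x, vscal (a + b) x = vadd (vscal a x) (vscal b x);
  vnorm_eq0 : forall x, vnorm x = 0 -> x = vzero;
  vnorm_triangle : forall x y, vnorm (vadd x y) <= vnorm x + vnorm y;
  vnorm_scal : forall a x, vnorm (vscal a x) = Rabs a * vnorm x;
  complete : forall u : nat -> car,
    (forall eps, 0 < eps -> exists N, forall n m, (N <= n)%nat -> (N <= m)%nat ->
        vnorm (vadd (u n) (vopp (u m))) < eps) ->
    exists l, forall eps, 0 < eps -> exists N, forall n, (N <= n)%nat ->
        vnorm (vadd (u n) (vopp l)) < eps
}.

Arguments vzero {b} : rename.
Arguments vadd {b} : rename.
Arguments vopp {b} : rename.
Arguments vscal {b} : rename.
Arguments vnorm {b} : rename.

Definition vsub {X : Banach} (x y : X) : X := vadd x (vopp y).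

Definition is_open {X : Banach} (U : X -> Prop) : Prop :=
  forall x, U x -> exists r, 0 < r /\ forall y, vnorm (vsub y x) < r -> U y.

Definition is_connected {X : Banach} (S : X -> Prop) : Prop :=
  forall U V : X -> Prop, is_open U -> is_open V ->
    (forall x, S x -> U x \/ V x) ->
    (exists x, S x /\ U x) -> (exists x, S x /\ V x) ->
    exists x, S x /\ U x /\ V x.

Definition image {X Y : Banach} (f : X -> Y) (U : X -> Prop) : Y -> Prop :=
  fun y => exists u, U u /\ f u = y.

Definition injective_on {X Y : Banach} (f : X -> Y) (U : X -> Prop) : Prop :=
  forall u v, U u -> U v -> f u = f v -> u = v.

Definition continuous_on {X Y : Banach} (g : X -> Y) (S : X -> Prop) : Prop :=
  forall x, S x -> forall eps, 0 < eps -> exists delta, 0 < delta /\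
    forall y, S y -> vnorm (vsub y x) < delta -> vnorm (vsub (g y) (g x)) < eps.

Definition local_homeo {X Y : Banach} (D : X -> Prop) (f : X -> Y) : Prop :=
  forall x, D x -> exists U : X -> Prop,
    is_open U /\ U x /\ (forall u, U u -> D u) /\
    is_open (image f U) /\ injective_on f U /\ continuous_on f U /\
    exists g : Y -> X, (forall u, U u -> g (f u) = u) /\ continuous_on g (image f U).

Definition is_flow {X : Banach} (D : X -> Prop) (Dom : X -> R -> Prop)
    (Phi : X -> R -> X) : Prop :=
  (forall x t, Dom x t -> D x) /\
  (forall x t, Dom x t -> exists r, 0 < r /\
      forall y s, vnorm (vsub y x) < r -> Rabs (s - t) < r -> Dom y s) /\
  (forall x t, Dom x t -> D (Phi x t)) /\
  (forall x t, Dom x t -> forall eps, 0 < eps -> exists delta, 0 < delta /\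
      forall y s, Dom y s -> vnorm (vsub y x) < delta -> Rabs (s - t) < delta ->
        vnorm (vsub (Phi y s) (Phi x t)) < eps) /\
  (forall x, D x -> Dom x 0) /\
  (forall x a b c, Dom x a -> Dom x c -> a <= b <= c -> Dom x b) /\
  (forall x, D x -> Phi x 0 = x) /\
  (forall x t1 t2, Dom x t1 -> Dom x (t1 + t2) ->
      Dom (Phi x t1) t2 /\ Phi (Phi x t1) t2 = Phi x (t1 + t2)).

Definition Psi {Y : Banach} (y0 : Y) (y : Y) (t : R) : Y :=
  vadd y0 (vscal (exp (- t)) (vsub y y0)).

Definition is_interval0 (J : R -> Prop) : Prop :=
  J 0 /\ forall a b c, J a -> J c -> a <= b <= c -> J b.

Definition is_lifting {X Y : Banach} (D : X -> Prop) (f : X -> Y) (y0 : Y)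
    (x : X) (J : R -> Prop) (gamma : R -> X) : Prop :=
  is_interval0 J /\ gamma 0 = x /\
  (forall t, J t -> D (gamma t)) /\
  (forall t, J t -> f (gamma t) = Psi y0 (f x) t) /\
  (forall t, J t -> forall eps, 0 < eps -> exists delta, 0 < delta /\
      forall s, J s -> Rabs (s - t) < delta -> vnorm (vsub (gamma s) (gamma t)) < eps).

Definition is_aux_flow {X Y : Banach} (D : X -> Prop) (f : X -> Y) (y0 : Y)
    (Dom : X -> R -> Prop) (Phi : X -> R -> X) : Prop :=
  is_flow D Dom Phi /\
  (forall x t, Dom x t -> f (Phi x t) = Psi y0 (f x) t) /\
  (forall x, D x -> is_lifting D f y0 x (Dom x) (Phi x)) /\
  (forall x J gamma, D x -> is_lifting D f y0 x J gamma ->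
      forall t, J t -> Dom x t /\ gamma t = Phi x t).

Definition attraction_basin {X : Banach} (D : X -> Prop) (Dom : X -> R -> Prop)
    (Phi : X -> R -> X) (x0 : X) : X -> Prop :=
  fun x => D x /\ (forall t, 0 <= t -> Dom x t) /\
    (forall eps, 0 < eps -> exists T, forall t, T <= t ->
        vnorm (vsub (Phi x t) x0) < eps).

Definition star_shaped {Y : Banach} (S : Y -> Prop) (y0 : Y) : Prop :=
  forall y, S y -> forall l, 0 <= l <= 1 -> S (vadd y0 (vscal l (vsub y y0))).

(* The trajectory of x under the auxiliary flow is the lift through f of the
   ray segment from f x towards y0, so x lies in the basin exactly when this
   lift exists for all forward times and converges to x0.  Injectivity: two
   points with the same image have trajectories with the same image; both end
   up in a chart around x0 where f is injective, so they meet, and flowing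
   back gives equality of the starting points.  Star shape:
   f (Phi x s) = y0 + e^{-s} (f x - y0) and the basin is forward invariant.
   Maximality: if f|C is injective with f(C) star-shaped, then
   t |-> (f|C)^{-1} (Psi (f x) t) is a global lift, which is continuous and
   converges to x0 because an injective local homeomorphism has a continuous
   inverse.  Openness: applying maximality to a small chart around x0 shows
   the basin is a neighbourhood of x0; every trajectory of the basin enters
   it, and by continuity of the flow so do nearby trajectories. *)
From Stdlib Require Import Reals Lra ClassicalEpsilon.
Open Scope R_scope.

Section VectorAlgebra.
Variable X : Banach.

Lemma vadd_0l (x : X) : vadd vzero x = x.
Proof. rewrite (vadd_comm X); apply vadd_0. Qed.

Lemma vscal_0l (x : X) : vscal 0 x = vzero.
Proof.
  assert (Hdouble : vscal 0 x = vadd (vscal 0 x) (vscal 0 x)).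
  { rewrite <- (vscal_distr_s X). replace (0 + 0) with 0 by ring. reflexivity. }
  transitivity (vadd (vadd (vscal 0 x) (vscal 0 x)) (vopp (vscal 0 x))).
  - rewrite <- (vadd_assoc X), (vadd_opp X), (vadd_0 X). reflexivity.
  - rewrite <- Hdouble. apply vadd_opp.
Qed.

Lemma vopp_vscal (a : R) (x : X) : vopp (vscal a x) = vscal (- a) x.
Proof.
  transitivity (vadd (vadd (vscal (- a) x) (vscal a x)) (vopp (vscal a x))).
  - rewrite <- (vscal_distr_s X). replace (- a + a) with 0 by ring.
    rewrite vscal_0l. symmetry. apply vadd_0l.
  - rewrite <- (vadd_assoc X), (vadd_opp X), (vadd_0 X). reflexivity.
Qed.

Lemma vopp_eq_vscal (x : X) : vopp x = vscal (-1) x.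
Proof. rewrite <- (vscal_1 X x) at 1. apply vopp_vscal. Qed.

Lemma vopp_vadd (x y : X) : vopp (vadd x y) = vadd (vopp x) (vopp y).
Proof. rewrite !vopp_eq_vscal. apply vscal_distr_v. Qed.

Lemma vadd_ACA (a b c d : X) : vadd (vadd a b) (vadd c d) = vadd (vadd a c) (vadd b d).
Proof.
  rewrite <- (vadd_assoc X a b), (vadd_assoc X b c d), (vadd_comm X b c),
    <- (vadd_assoc X c b d), (vadd_assoc X). reflexivity.
Qed.

Lemma vnorm_zero : vnorm (@vzero X) = 0.
Proof. rewrite <- (vscal_0l vzero), (vnorm_scal X), Rabs_R0; ring. Qed.

Lemma vnorm_opp (x : X) : vnorm (vopp x) = vnorm x.
Proof. rewrite vopp_eq_vscal, (vnorm_scal X), Rabs_left by lra; ring. Qed.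

Lemma vnorm_ge0 (x : X) : 0 <= vnorm x.
Proof.
  pose proof (vnorm_triangle X x (vopp x)) as Htri.
  rewrite (vadd_opp X), vnorm_zero, vnorm_opp in Htri; lra.
Qed.

Lemma vnorm_sub_self (x : X) : vnorm (vsub x x) = 0.
Proof. unfold vsub; rewrite (vadd_opp X); apply vnorm_zero. Qed.

Lemma vnorm_sub_triangle (a b c : X) :
  vnorm (vsub a c) <= vnorm (vsub a b) + vnorm (vsub b c).
Proof.
  replace (vsub a c) with (vadd (vsub a b) (vsub b c)); [apply vnorm_triangle|].
  unfold vsub. rewrite <- (vadd_assoc X), (vadd_assoc X (vopp b) b (vopp c)),
    (vadd_comm X (vopp b) b), (vadd_opp X), vadd_0l. reflexivity.
Qed.

Lemma vsub_vaddKl (p v : X) : vsub (vadd p v) p = v.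
Proof.
  unfold vsub. rewrite (vadd_comm X p v), <- (vadd_assoc X), (vadd_opp X), (vadd_0 X).
  reflexivity.
Qed.

Lemma vsub_vadd_vscal (p u : X) (a b : R) :
  vsub (vadd p (vscal a u)) (vadd p (vscal b u)) = vscal (a - b) u.
Proof.
  unfold vsub. rewrite vopp_vadd, vopp_vscal, vadd_ACA, (vadd_opp X), vadd_0l,
    <- (vscal_distr_s X). f_equal; ring.
Qed.

End VectorAlgebra.

Definition converges_at_infty {X : Banach} (u : R -> X) (l : X) : Prop :=
  forall eps, 0 < eps -> exists T, forall t, T <= t -> vnorm (vsub (u t) l) < eps.

Lemma converges_at_infty_shift {X : Banach} (u v : R -> X) (l : X) (c T0 : R) :
  (forall t, T0 <= t -> v t = u (t - c)) ->
  converges_at_infty u l -> converges_at_infty v l.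
Proof.
  intros Hvu Hu eps Heps. destruct (Hu eps Heps) as (T & HT).
  exists (Rmax T0 (T + c)). intros t Ht.
  pose proof (Rmax_l T0 (T + c)). pose proof (Rmax_r T0 (T + c)).
  rewrite Hvu by lra. apply HT; lra.
Qed.

Lemma exp_opp_continuous (t eps : R) : 0 < eps -> exists d, 0 < d /\
  forall s, Rabs (s - t) < d -> Rabs (exp (- s) - exp (- t)) < eps.
Proof.
  intro Heps.
  destruct (derivable_continuous_pt exp (- t) (derivable_exp (- t)) eps Heps)
    as (d & Hd & Hcont).
  exists d. split; [lra|]. intros s Hs.
  destruct (Req_dec s t) as [->|Hne].
  - rewrite Rminus_diag, Rabs_R0; lra.
  - apply (Hcont (- s)). split.
    + split; [exact I|]. intro; apply Hne; lra.
    + simpl. unfold R_dist. replace (- s - - t) with (- (s - t)) by ring.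
      rewrite Rabs_Ropp; exact Hs.
Qed.

Lemma exp_opp_lt_eventually (eps : R) : 0 < eps ->
  exists T, forall t, T <= t -> exp (- t) < eps.
Proof.
  intro Heps. exists (- ln eps + 1). intros t Ht.
  rewrite <- (exp_ln eps Heps). apply exp_increasing. lra.
Qed.

Lemma exp_opp_le_1 (t : R) : 0 <= t -> exp (- t) <= 1.
Proof.
  intro Ht. rewrite <- exp_0. destruct (Req_dec t 0) as [->|].
  - rewrite Ropp_0; lra.
  - left; apply exp_increasing; lra.
Qed.

Lemma Rmult_lt_of_lt_div_succ (a N eta : R) :
  0 <= a -> 0 <= N -> a < eta / (N + 1) -> a * N < eta.
Proof.
  intros Ha HN Hlt.
  apply (Rmult_lt_compat_r (N + 1)) in Hlt; [|lra].
  unfold Rdiv in Hlt. rewrite Rmult_assoc, Rinv_l in Hlt by lra. nra.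
Qed.

Section Contraction.
Variables (Y : Banach) (y0 y : Y).

Lemma Psi_0 : Psi y0 y 0 = y.
Proof.
  unfold Psi. rewrite Ropp_0, exp_0, (vscal_1 Y). unfold vsub.
  rewrite (vadd_comm Y y (vopp y0)), (vadd_assoc Y), (vadd_opp Y), vadd_0l.
  reflexivity.
Qed.

Lemma Psi_opp_ln (l : R) : 0 < l -> Psi y0 y (- ln l) = vadd y0 (vscal l (vsub y y0)).
Proof. intro Hl. unfold Psi. rewrite Ropp_involutive, exp_ln; auto. Qed.

Lemma vnorm_Psi_sub_center (t : R) :
  vnorm (vsub (Psi y0 y t) y0) = exp (- t) * vnorm (vsub y y0).
Proof.
  unfold Psi. rewrite vsub_vaddKl, (vnorm_scal Y), Rabs_right; [reflexivity|].
  left; apply exp_pos.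
Qed.

Lemma Psi_continuous (t eps : R) : 0 < eps -> exists d, 0 < d /\
  forall s, Rabs (s - t) < d -> vnorm (vsub (Psi y0 y s) (Psi y0 y t)) < eps.
Proof.
  intro Heps. pose proof (vnorm_ge0 Y (vsub y y0)) as HN.
  destruct (exp_opp_continuous t (eps / (vnorm (vsub y y0) + 1)))
    as (d & Hd & Hexp); [apply Rdiv_lt_0_compat; lra|].
  exists d. split; [exact Hd|]. intros s Hs.
  unfold Psi. rewrite vsub_vadd_vscal, (vnorm_scal Y).
  apply Rmult_lt_of_lt_div_succ; auto using Rabs_pos.
Qed.

Lemma Psi_converges : converges_at_infty (Psi y0 y) y0.
Proof.
  intros eps Heps. pose proof (vnorm_ge0 Y (vsub y y0)) as HN.
  destruct (exp_opp_lt_eventually (eps / (vnorm (vsub y y0) + 1))) as (T & HT);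
    [apply Rdiv_lt_0_compat; lra|].
  exists T. intros t Ht. rewrite vnorm_Psi_sub_center.
  apply Rmult_lt_of_lt_div_succ; auto. left; apply exp_pos.
Qed.

End Contraction.

Section Flow.
Variables (X : Banach) (D : X -> Prop) (Dom : X -> R -> Prop) (Phi : X -> R -> X).
Hypothesis Hflow : is_flow D Dom Phi.

Lemma flow_shift (x : X) (s t : R) : Dom x s -> Dom x (s + t) ->
  Dom (Phi x s) t /\ Phi (Phi x s) t = Phi x (s + t).
Proof. apply Hflow. Qed.

Lemma flow_back (x : X) (T : R) : Dom x T ->
  Dom (Phi x T) (- T) /\ Phi (Phi x T) (- T) = x.
Proof.
  pose proof Hflow as (HdomD & _ & _ & _ & Hdom0 & _ & Hphi0 & _).
  intro HT. assert (Hx : D x) by exact (HdomD x T HT).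
  assert (H0 : Dom x (T + - T)) by (replace (T + - T) with 0 by ring; auto).
  destruct (flow_shift x T (- T) HT H0) as (Hdom & ->).
  replace (T + - T) with 0 by ring. auto.
Qed.

End Flow.

Section LocalHomeomorphism.
Variables (X Y : Banach) (D : X -> Prop) (f : X -> Y).
Hypothesis Hlh : local_homeo D f.

Lemma injective_local_homeo_inverse_continuous (C : X -> Prop) (c : X) :
  is_open C -> injective_on f C -> C c -> D c ->
  forall eps, 0 < eps -> exists eta, 0 < eta /\
    forall u, C u -> vnorm (vsub (f u) (f c)) < eta -> vnorm (vsub u c) < eps.
Proof.
  intros HCo HCinj Hc HDc eps Heps.
  destruct (Hlh c HDc) as (U & _ & HUc & _ & HfUo & _ & _ & g & Hgf & Hgc).
  assert (HfUc : image f U (f c)) by (exists c; auto).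
  destruct (HfUo (f c) HfUc) as (r1 & Hr1 & HfU).
  destruct (HCo c Hc) as (r2 & Hr2 & HC).
  destruct (Hgc (f c) HfUc (Rmin eps r2)) as (d & Hd & Hg); [apply Rmin_glb_lt; auto|].
  exists (Rmin r1 d). split; [apply Rmin_glb_lt; auto|]. intros u Hu Hfu.
  pose proof (Rmin_l r1 d). pose proof (Rmin_r r1 d).
  pose proof (Rmin_l eps r2). pose proof (Rmin_r eps r2).
  destruct (HfU (f u) ltac:(lra)) as (v & Hv & Hfv).
  (* v is the chart preimage of f u; it is close to c, hence in C, hence u = v. *)
  assert (Hvc : vnorm (vsub v c) < Rmin eps r2).
  { rewrite <- (Hgf v Hv), <- (Hgf c HUc), Hfv. apply Hg; [exists v; auto | lra]. }
  assert (Huv : u = v) by (apply HCinj; auto; apply HC; lra).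
  subst v; lra.
Qed.

Lemma star_shaped_chart (x0 : X) : D x0 -> exists V : X -> Prop,
  is_open V /\ V x0 /\ (forall x, V x -> D x) /\ injective_on f V /\
  star_shaped (image f V) (f x0).
Proof.
  intro HD0.
  destruct (Hlh x0 HD0) as (U & HUo & HU0 & HUD & HfUo & Hinj & Hfc & _).
  destruct (HfUo (f x0) (ex_intro _ x0 (conj HU0 eq_refl))) as (r & Hr & HfU).
  (* The part of the chart lying over a ball inside f(U): its image is the whole ball. *)
  exists (fun x => U x /\ vnorm (vsub (f x) (f x0)) < r).
  split; [|split; [|split; [|split]]].
  - intros x (Hx & Hfx).
    destruct (HUo x Hx) as (r' & Hr' & HU).
    destruct (Hfc x Hx (r - vnorm (vsub (f x) (f x0)))) as (d & Hd & Hf); [lra|].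
    exists (Rmin r' d). split; [apply Rmin_glb_lt; auto|]. intros y Hy.
    pose proof (Rmin_l r' d). pose proof (Rmin_r r' d).
    assert (HUy : U y) by (apply HU; lra).
    split; [exact HUy|].
    pose proof (vnorm_sub_triangle Y (f y) (f x) (f x0)).
    assert (vnorm (vsub (f y) (f x)) < r - vnorm (vsub (f x) (f x0))) by (apply Hf; auto; lra).
    lra.
  - rewrite vnorm_sub_self. auto.
  - intros x (Hx & _). auto.
  - intros u v (Hu & _) (Hv & _). auto.
  - intros y (u & (Hu & Hfu) & <-) l Hl.
    set (p := vadd (f x0) (vscal l (vsub (f u) (f x0)))).
    assert (Hp : vnorm (vsub p (f x0)) < r).
    { unfold p. rewrite vsub_vaddKl, (vnorm_scal Y), Rabs_right by lra.
      pose proof (vnorm_ge0 Y (vsub (f u) (f x0))). nra. }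
    destruct (HfU p Hp) as (v & Hv & Hfv).
    exists v. split; [split; [exact Hv | rewrite Hfv; exact Hp] | exact Hfv].
Qed.

End LocalHomeomorphism.

Section AttractionBasin.
Variables (X Y : Banach) (D : X -> Prop) (f : X -> Y) (x0 : X)
  (Dom : X -> R -> Prop) (Phi : X -> R -> X).
Hypothesis Hlh : local_homeo D f.
Hypothesis Haux : is_aux_flow D f (f x0) Dom Phi.
Hypothesis HD0 : D x0.

Let A := attraction_basin D Dom Phi x0.
Let Hflow : is_flow D Dom Phi := proj1 Haux.

Lemma attraction_basin_of_lifting (x : X) (gamma : R -> X) :
  D x -> is_lifting D f (f x0) x (fun t => 0 <= t) gamma ->
  converges_at_infty gamma x0 -> A x.
Proof.
  intros Hx Hlift Hconv. pose proof Haux as (_ & _ & _ & Hmax).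
  split; [exact Hx | split].
  - intros t Ht. apply (Hmax x _ gamma Hx Hlift t Ht).
  - apply (converges_at_infty_shift gamma (Phi x) x0 0 0); [|exact Hconv].
    intros t Ht. rewrite Rminus_0_r. symmetry. apply (Hmax x _ gamma Hx Hlift t Ht).
Qed.

Lemma basin_forward_invariant (x : X) (s : R) : A x -> 0 <= s -> A (Phi x s).
Proof.
  intros (Hx & Hdom & Hconv) Hs.
  pose proof Hflow as (_ & _ & HPhiD & _).
  split; [apply HPhiD, Hdom; exact Hs | split].
  - intros t Ht. apply (flow_shift X D Dom Phi Hflow); apply Hdom; lra.
  - apply (converges_at_infty_shift (Phi x) _ x0 (- s) 0); [|exact Hconv].
    intros t Ht. replace (t - - s) with (s + t) by ring.
    apply (flow_shift X D Dom Phi Hflow); apply Hdom; lra.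
Qed.

Lemma basin_backward_invariant (y : X) (T : R) :
  0 <= T -> Dom y T -> A (Phi y T) -> A y.
Proof.
  intros HT HyT (_ & Hdom & Hconv).
  pose proof Hflow as (HdomD & _ & _ & _ & Hdom0 & Hinterval & _).
  destruct (flow_back X D Dom Phi Hflow y T HyT) as (Hback & Hy).
  assert (Hahead : forall s, 0 <= s -> Dom y (T + s) /\ Phi y (T + s) = Phi (Phi y T) s).
  { intros s Hs.
    destruct (flow_shift X D Dom Phi Hflow (Phi y T) (- T) (T + s) Hback)
      as (Hd & HPhi); [replace (- T + (T + s)) with s by ring; auto|].
    rewrite Hy in Hd, HPhi. rewrite HPhi. split; [exact Hd | f_equal; ring]. }
  split; [exact (HdomD y T HyT) | split].
  - intros t Ht. destruct (Rle_dec t T).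
    + apply (Hinterval y 0 t T); [apply Hdom0, (HdomD y T HyT) | exact HyT | lra].
    + replace t with (T + (t - T)) by ring. apply Hahead; lra.
  - apply (converges_at_infty_shift (Phi (Phi y T)) _ x0 T T); [|exact Hconv].
    intros t Ht. replace t with (T + (t - T)) at 1 by ring. apply Hahead; lra.
Qed.

Lemma basin_injective : injective_on f A.
Proof.
  pose proof Haux as (_ & HfPhi & _).
  intros x1 x2 (Hx1 & Hdom1 & Hconv1) (Hx2 & Hdom2 & Hconv2) Hf.
  destruct (Hlh x0 HD0) as (U & HUo & HU0 & _ & _ & Hinj & _).
  destruct (HUo x0 HU0) as (r & Hr & HU).
  destruct (Hconv1 r Hr) as (T1 & HT1). destruct (Hconv2 r Hr) as (T2 & HT2).
  set (T := Rmax (Rmax T1 T2) 0).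
  pose proof (Rmax_l T1 T2). pose proof (Rmax_r T1 T2).
  pose proof (Rmax_l (Rmax T1 T2) 0). pose proof (Rmax_r (Rmax T1 T2) 0).
  assert (HT : 0 <= T) by (unfold T; lra).
  (* Both trajectories reach the injectivity chart around x0 with the same image. *)
  assert (Hmeet : Phi x1 T = Phi x2 T).
  { apply Hinj; [apply HU, HT1 | apply HU, HT2 |]; try (unfold T; lra).
    rewrite (HfPhi x1 T (Hdom1 T HT)), (HfPhi x2 T (Hdom2 T HT)), Hf. reflexivity. }
  rewrite <- (proj2 (flow_back X D Dom Phi Hflow x1 T (Hdom1 T HT))),
    <- (proj2 (flow_back X D Dom Phi Hflow x2 T (Hdom2 T HT))), Hmeet.
  reflexivity.
Qed.

Lemma basin_maximal (C : X -> Prop) : is_open C -> (forall x, C x -> D x) -> C x0 ->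
  injective_on f C -> star_shaped (image f C) (f x0) -> forall x, C x -> A x.
Proof.
  intros HCo HCD HC0 HCinj HCstar x Hx.
  assert (Hex : forall t, 0 <= t -> exists u, C u /\ f u = Psi (f x0) (f x) t).
  { intros t Ht.
    destruct (HCstar (f x) (ex_intro _ x (conj Hx eq_refl)) (exp (- t)))
      as (u & Hu & Hfu); [split; [left; apply exp_pos | apply exp_opp_le_1; auto]|].
    exists u; split; auto. }
  set (gamma := fun t => epsilon (inhabits x) (fun u => C u /\ f u = Psi (f x0) (f x) t)).
  assert (Hgamma : forall t, 0 <= t -> C (gamma t) /\ f (gamma t) = Psi (f x0) (f x) t).
  { intros t Ht. exact (epsilon_spec _ _ (Hex t Ht)). }
  apply (attraction_basin_of_lifting x gamma (HCD x Hx)).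
  - split; [split; [lra | intros; lra]|]. split.
    { destruct (Hgamma 0 (Rle_refl 0)) as (Hc & Hf).
      apply HCinj; auto. rewrite Hf, Psi_0. reflexivity. }
    split; [intros t Ht; apply HCD, (Hgamma t Ht)|].
    split; [intros t Ht; apply (Hgamma t Ht)|].
    intros t Ht eps Heps. destruct (Hgamma t Ht) as (Hct & Hft).
    destruct (injective_local_homeo_inverse_continuous X Y D f Hlh C (gamma t)
      HCo HCinj Hct (HCD _ Hct) eps Heps) as (eta & Heta & Hinv).
    destruct (Psi_continuous Y (f x0) (f x) t eta Heta) as (d & Hd & HPsi).
    exists d. split; [exact Hd|]. intros s Hs Hst.
    destruct (Hgamma s Hs) as (Hcs & Hfs).
    apply Hinv; [exact Hcs|]. rewrite Hfs, Hft. apply HPsi; exact Hst.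
  - intros eps Heps.
    destruct (injective_local_homeo_inverse_continuous X Y D f Hlh C x0
      HCo HCinj HC0 HD0 eps Heps) as (eta & Heta & Hinv).
    destruct (Psi_converges Y (f x0) (f x) eta Heta) as (T & HT).
    exists (Rmax T 0). intros t Ht.
    pose proof (Rmax_l T 0). pose proof (Rmax_r T 0).
    destruct (Hgamma t ltac:(lra)) as (Hct & Hft).
    apply Hinv; [exact Hct|]. rewrite Hft. apply HT; lra.
Qed.

Lemma basin_neighbourhood : exists r, 0 < r /\ forall z, vnorm (vsub z x0) < r -> A z.
Proof.
  destruct (star_shaped_chart X Y D f Hlh x0 HD0)
    as (V & HVo & HV0 & HVD & HVinj & HVstar).
  destruct (HVo x0 HV0) as (r & Hr & HV).
  exists r. split; [exact Hr|]. intros z Hz.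
  apply (basin_maximal V); auto.
Qed.

Lemma basin_open : is_open A.
Proof.
  intros x (Hx & Hdom & Hconv).
  pose proof Hflow as (_ & HdomOpen & _ & HPhiCont & _).
  destruct basin_neighbourhood as (r & Hr & Hnear).
  destruct (Hconv (r / 2) ltac:(lra)) as (T0 & HT0).
  set (T := Rmax T0 0). pose proof (Rmax_l T0 0). pose proof (Rmax_r T0 0).
  assert (HxT : Dom x T) by (apply Hdom; unfold T; lra).
  destruct (HdomOpen x T HxT) as (rho1 & Hrho1 & HdomBall).
  destruct (HPhiCont x T HxT (r / 2) ltac:(lra)) as (rho2 & Hrho2 & HPhiBall).
  exists (Rmin rho1 rho2). split; [apply Rmin_glb_lt; auto|]. intros y Hy.
  pose proof (Rmin_l rho1 rho2). pose proof (Rmin_r rho1 rho2).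
  assert (HTT : Rabs (T - T) = 0) by (rewrite Rminus_diag; apply Rabs_R0).
  assert (HyT : Dom y T) by (apply HdomBall; lra).
  apply (basin_backward_invariant y T); [unfold T; lra | exact HyT |].
  apply Hnear.
  pose proof (vnorm_sub_triangle X (Phi y T) (Phi x T) x0).
  assert (vnorm (vsub (Phi y T) (Phi x T)) < r / 2) by (apply HPhiBall; auto; lra).
  assert (vnorm (vsub (Phi x T) x0) < r / 2) by (apply HT0; unfold T; lra).
  lra.
Qed.

Lemma basin_star_shaped : star_shaped (image f A) (f x0).
Proof.
  pose proof Haux as (_ & HfPhi & _).
  intros y (x & Hx & <-) l Hl.
  destruct (Req_dec l 0) as [->|Hl0].
  - exists x0. split.
    + destruct basin_neighbourhood as (r & Hr & Hnear).
      apply Hnear. rewrite vnorm_sub_self. exact Hr.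
    + rewrite (vscal_0l Y), (vadd_0 Y). reflexivity.
  - assert (Hs : 0 <= - ln l).
    { destruct (Req_dec l 1) as [->|Hl1]; [rewrite ln_1; lra|].
      pose proof (ln_increasing l 1 ltac:(lra) ltac:(lra)). rewrite ln_1 in *. lra. }
    exists (Phi x (- ln l)). split; [apply basin_forward_invariant; auto|].
    rewrite (HfPhi x _ (proj1 (proj2 Hx) _ Hs)). apply Psi_opp_ln. lra.
Qed.

End AttractionBasin.

Theorem proposition2p1 (X Y : Banach) (D : X -> Prop) (f : X -> Y) (x0 : X)
    (Dom : X -> R -> Prop) (Phi : X -> R -> X) :
  is_open D -> (exists x, D x) -> is_connected D -> local_homeo D f -> D x0 ->
  is_aux_flow D f (f x0) Dom Phi ->
  let A := attraction_basin D Dom Phi x0 in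
  is_open A /\
  injective_on f A /\
  star_shaped (image f A) (f x0) /\
  (forall C : X -> Prop, is_open C -> is_connected C ->
     (forall x, C x -> D x) -> C x0 -> injective_on f C ->
     star_shaped (image f C) (f x0) ->
     forall x, C x -> A x).
Proof.
  intros _ _ _ Hlh HD0 Haux A.
  split; [exact (basin_open X Y D f x0 Dom Phi Hlh Haux HD0)|].
  split; [exact (basin_injective X Y D f x0 Dom Phi Hlh Haux HD0)|].
  split; [exact (basin_star_shaped X Y D f x0 Dom Phi Hlh Haux HD0)|].
  intros C HCo _ HCD HC0 HCinj HCstar.
  exact (basin_maximal X Y D f x0 Dom Phi Hlh Haux HD0 C HCo HCD HC0 HCinj HCstar).
Qed.
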